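(* Let $\mathbb{F}_Q$ be a prime field, $\mathbb{F}_Q^*=\mathbb{F}_Q\setminus\{0\}$, $\sigma\in\mathbb{N}$, and $H:\{0,1\}^\sigma\to\mathbb{F}_Q$ a function with no collisions on the inputs considered. An OLE tuple $(r_A,r_B,s_A,s_B)$ is generated by drawing $s_A,s_B$ uniformly from $\mathbb{F}_Q$ and $r_B$ uniformly from $\mathbb{F}_Q^*$, independently, and setting $r_A=(s_A+s_B)/r_B$ (so $r_Ar_B=s_A+s_B$); Alice receives $(r_A,s_A)$ and Bob receives $(r_B,s_B)$. Alice has input $x\in\{0,1\}^\sigma$ and Bob has input $y\in\{0,1\}^\sigma$. In the comparison protocol, Alice sends $c=s_A-H(x)$ to Bob, Bob sends $d=(c+H(y)+s_B)/r_B$ to Alice, and Alice outputs ''match'' iff $d=r_A$ (her output is whether $x=y$; Bob has no output). Then the protocol is secure in the semi-honest model: there exist simulators $\mathsf{Sim}_A$ (given $x$, Alice's OLE share and the output) and $\mathsf{Sim}_B$ (given $y$ and Bob's OLE share) whose outputs are identically distributed to Alice's and Bob's respective views in the protocol.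
   Context: Semi-honest security: a party's view consists of its input, its random coins/correlated randomness and all messages it receives; a protocol is secure if each party's view can be simulated from that party's input and output alone (here, perfectly, i.e. with identical distribution). All arithmetic is in $\mathbb{F}_Q$. *)

From mathcomp Require Import all_boot all_algebra.
Set Implicit Arguments. Unset Strict Implicit. Unset Printing Implicit Defensive.
Import GRing.Theory Num.Theory.
Local Open Scope ring_scope.

Definition bitstring (sigma : nat) := (sigma.-tuple bool).

(* Random coins of the OLE dealer: (s_A, s_B, r_B) with s_A, s_B uniform in
   F_Q and r_B uniform in F_Q^*, independently: uniform distribution on this set. *)
Definition ole_coins (Q : nat) : {set 'F_Q * 'F_Q * 'F_Q} :=
  [set w | w.2 != 0].

Definition ole_sA Q (w : 'F_Q * 'F_Q * 'F_Q) : 'F_Q := w.1.1.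
Definition ole_sB Q (w : 'F_Q * 'F_Q * 'F_Q) : 'F_Q := w.1.2.
Definition ole_rB Q (w : 'F_Q * 'F_Q * 'F_Q) : 'F_Q := w.2.
Definition ole_rA Q (w : 'F_Q * 'F_Q * 'F_Q) : 'F_Q :=
  (ole_sA w + ole_sB w) / ole_rB w.

Definition prob (T : finType) (V : eqType) (S : {set T}) (f : T -> V) (v : V)
  : rat := (#|[set t in S | f t == v]|%:R / #|S|%:R)%R.

Definition msg_c Q sigma (H : bitstring sigma -> 'F_Q) (x : bitstring sigma)
  (w : 'F_Q * 'F_Q * 'F_Q) : 'F_Q := ole_sA w - H x.
Definition msg_d Q sigma (H : bitstring sigma -> 'F_Q) (x y : bitstring sigma)
  (w : 'F_Q * 'F_Q * 'F_Q) : 'F_Q := (msg_c H x w + H y + ole_sB w) / ole_rB w.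

Definition alice_output Q sigma (H : bitstring sigma -> 'F_Q) (x y : bitstring sigma)
  (w : 'F_Q * 'F_Q * 'F_Q) : bool := msg_d H x y w == ole_rA w.

Definition viewA_t Q sigma := (bitstring sigma * ('F_Q * 'F_Q) * 'F_Q)%type.
Definition viewB_t Q sigma := (bitstring sigma * ('F_Q * 'F_Q) * 'F_Q)%type.

Definition viewA Q sigma (H : bitstring sigma -> 'F_Q) (x y : bitstring sigma)
  (w : 'F_Q * 'F_Q * 'F_Q) : viewA_t Q sigma :=
  (x, (ole_rA w, ole_sA w), msg_d H x y w).
Definition viewB Q sigma (H : bitstring sigma -> 'F_Q) (x y : bitstring sigma)
  (w : 'F_Q * 'F_Q * 'F_Q) : viewB_t Q sigma :=
  (y, (ole_rB w, ole_sB w), msg_c H x w).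

(* Coins of the ideal experiment: dealer coins and simulator coins. *)
Definition ideal_coins Q (Omega : finType) : {set ('F_Q * 'F_Q * 'F_Q) * Omega} :=
  [set p | p.1 \in ole_coins Q].

From mathcomp Require Import all_boot all_algebra ring.
Set Implicit Arguments. Unset Strict Implicit. Unset Printing Implicit Defensive.
Import GRing.Theory Num.Theory.
Local Open Scope ring_scope.

(* Bob sees c = s_A - H(x), and s_A is uniform and independent of his share
   (r_B, s_B), so c is a fresh uniform element.  Alice sees
   d = r_A + (H(y) - H(x)) / r_B.  The dealer's coins are equivalently
   (r_A, s_A, r_B) uniform on F_Q x F_Q x F_Q^*, so when x <> y the offset
   (H(y) - H(x)) / r_B is uniform on F_Q^* and independent of her share
   (r_A, s_A); when x = y it vanishes.  Each equality of distributions is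
   witnessed by a bijection of the ideal coin space that carries the simulated
   view onto the real one. *)

Lemma prob_reindex (T : finType) (V : eqType) (S : {set T}) (f g : T -> V)
    (phi : T -> T) (v : V) :
    {in S &, injective phi} -> {in S, forall t, phi t \in S} ->
    {in S, forall t, g (phi t) = f t} ->
  prob S f v = prob S g v.
Proof.
move=> phi_inj phiS gphi.
have phiS_eq : phi @: S = S.
  apply/eqP; rewrite eqEcard card_in_imset // leqnn andbT.
  by apply/subsetP => _ /imsetP[t tS ->]; apply: phiS.
rewrite /prob.
have -> : [set t in S | g t == v] = phi @: [set t in S | f t == v].
  apply/setP => u; rewrite inE; apply/andP/imsetP => [[]|[t]].
    rewrite -{1}phiS_eq => /imsetP[t tS ->] gv.
    by exists t; rewrite // inE tS -gphi.
  by rewrite inE => /andP[tS ft] ->; rewrite phiS // gphi.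
rewrite card_in_imset // => t1 t2 /setIdP[t1S _] /setIdP[t2S _].
exact: phi_inj.
Qed.

Lemma prob_setX_fst (T W : finType) (V : eqType) (S : {set T}) (f : T -> V)
    (v : V) :
  (0 < #|W|)%N ->
  prob [set p : T * W | p.1 \in S] (fun p => f p.1) v = prob S f v.
Proof.
move=> W_gt0.
have setXT (A : {set T}) : [set p : T * W | p.1 \in A] = setX A [set: W].
  by apply/setP => -[t w]; rewrite !inE andbT.
rewrite /prob; have -> : [set p in [set p : T * W | p.1 \in S] | f p.1 == v] =
          setX [set t in S | f t == v] [set: W].
  by apply/setP => -[t w]; rewrite !inE andbT.
rewrite setXT !cardsX cardsT !natrM -mulf_div divff ?mulr1 //.
by rewrite pnatr_eq0 -lt0n.
Qed.

Lemma prob_setX_reindex (T W : finType) (V : eqType) (S : {set T}) (f : T -> V)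
    (g : T * W -> V) (phi : T * W -> T * W) (v : V) :
    let SW := [set p : T * W | p.1 \in S] in
    (0 < #|W|)%N -> {in SW, involutive phi} ->
    {in SW, forall p, phi p \in SW} ->
    {in SW, forall p, g (phi p) = f p.1} ->
  prob S f v = prob SW g v.
Proof.
move=> SW W_gt0 phiK phiS gphi; rewrite -(prob_setX_fst S f v W_gt0).
by apply: (prob_reindex (phi := phi)) => //; exact: can_in_inj phiK.
Qed.

Section Protocol.

Variables (Q sigma : nat) (H : bitstring sigma -> 'F_Q).

Local Notation coins := ('F_Q * 'F_Q * 'F_Q)%type.
Definition sim_coins : finType := ('F_Q * {z : 'F_Q | z != 0})%type.

Definition ole_of_share (rA sA rB : 'F_Q) : coins := (sA, rA * rB - sA, rB).

Lemma ole_of_shareK w :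
  ole_rB w != 0 -> ole_of_share (ole_rA w) (ole_sA w) (ole_rB w) = w.
Proof.
case: w => [[sA sB] rB] rB0.
by rewrite /ole_of_share /ole_rA mulfVK // addrC addKr.
Qed.

Lemma ole_sA_of_share rA sA rB : ole_sA (ole_of_share rA sA rB) = sA.
Proof. by []. Qed.

Lemma ole_rA_of_share rA sA rB : rB != 0 -> ole_rA (ole_of_share rA sA rB) = rA.
Proof. by move=> rB0; rewrite /ole_rA /= addrC subrK mulfK. Qed.

Lemma msg_dE x y w : msg_d H x y w = ole_rA w + (H y - H x) / ole_rB w.
Proof. by rewrite /msg_d /msg_c /ole_rA -mulrDl; congr (_ / _); ring. Qed.

Definition simA (x : bitstring sigma) (share : 'F_Q * 'F_Q) (b : bool)
    (w : sim_coins) : viewA_t Q sigma :=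
  (x, share, if b then share.1 else share.1 + val w.2).

Definition simB (y : bitstring sigma) (share : 'F_Q * 'F_Q) (w : sim_coins)
    : viewB_t Q sigma :=
  (y, share, w.1).

Lemma sim_coins_gt0 : (0 < #|sim_coins|)%N.
Proof. by apply/card_gt0P; exists (0, exist _ 1 (oner_neq0 _)). Qed.

Lemma viewA_simulated_eq x v :
  prob (ole_coins Q) (viewA H x x) v =
  prob (ideal_coins Q sim_coins)
    (fun p => simA x (ole_rA p.1, ole_sA p.1) true p.2) v.
Proof.
apply: (prob_setX_reindex (phi := id)) sim_coins_gt0 _ _ _ => // p _.
by rewrite /viewA msg_dE subrr mul0r addr0.
Qed.

(* (r_A, s_A, r_B, o, t) |-> (r_A, s_A, delta / t, o, delta / r_B), an
   involution when delta, r_B and t are nonzero. *)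
Definition exchange_offset (delta : 'F_Q) (p : coins * sim_coins) :=
  (ole_of_share (ole_rA p.1) (ole_sA p.1) (delta / val p.2.2),
   (p.2.1, insubd p.2.2 (delta / ole_rB p.1))).

Lemma viewA_simulated_neq x y v : H x != H y ->
  prob (ole_coins Q) (viewA H x y) v =
  prob (ideal_coins Q sim_coins)
    (fun p => simA x (ole_rA p.1, ole_sA p.1) false p.2) v.
Proof.
rewrite eq_sym -subr_eq0 => delta0.
have offsetE w (t : {z : 'F_Q | z != 0}) : ole_rB w != 0 ->
    val (insubd t ((H y - H x) / ole_rB w)) = (H y - H x) / ole_rB w.
  by move=> rB0; rewrite val_insubd mulf_neq0 ?invr_eq0.
have offset_neq0 (t : {z : 'F_Q | z != 0}) : (H y - H x) / val t != 0.
  by rewrite mulf_neq0 ?invr_eq0 ?(valP t).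
apply: (prob_setX_reindex (phi := exchange_offset (H y - H x)))
  sim_coins_gt0 _ _ _.
- move=> [w [o t]]; rewrite !inE /= => rB0.
  rewrite /exchange_offset /= ole_rA_of_share ?offset_neq0 //.
  rewrite ole_sA_of_share offsetE //.
  by rewrite (divKf delta0) ole_of_shareK // (divKf delta0) valKd.
- by move=> [w [o t]] _; rewrite !inE; exact: offset_neq0.
- move=> [w [o t]]; rewrite !inE /= => rB0.
  rewrite /simA /exchange_offset /= ole_rA_of_share ?offset_neq0 //.
  by rewrite offsetE // /viewA msg_dE.
Qed.

Definition exchange_sA x (p : coins * sim_coins) : coins * sim_coins :=
  ((p.2.1 + H x, ole_sB p.1, ole_rB p.1), (ole_sA p.1 - H x, p.2.2)).

Lemma viewB_simulated x y v :
  prob (ole_coins Q) (viewB H x y) v =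
  prob (ideal_coins Q sim_coins)
    (fun p => simB y (ole_rB p.1, ole_sB p.1) p.2) v.
Proof.
apply: (prob_setX_reindex (phi := exchange_sA x)) sim_coins_gt0 _ _ _ => //.
- by move=> [[[sA sB] rB] [o t]] _; rewrite /exchange_sA /= addrK subrK.
- by move=> [w [o t]]; rewrite !inE.
Qed.

End Protocol.

Theorem theorem2 (Q sigma : nat) (HQ : prime Q) (H : bitstring sigma -> 'F_Q) :
  exists (Omega : finType)
    (SimA : bitstring sigma -> 'F_Q * 'F_Q -> bool -> Omega -> viewA_t Q sigma)
    (SimB : bitstring sigma -> 'F_Q * 'F_Q -> Omega -> viewB_t Q sigma),
  forall x y : bitstring sigma, (H x = H y -> x = y) ->
    (forall v : viewA_t Q sigma,
       prob (ole_coins Q) (viewA H x y) v =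
       prob (ideal_coins Q Omega)
         (fun p => SimA x (ole_rA p.1, ole_sA p.1) (x == y) p.2) v) /\
    (forall v : viewB_t Q sigma,
       prob (ole_coins Q) (viewB H x y) v =
       prob (ideal_coins Q Omega)
         (fun p => SimB y (ole_rB p.1, ole_sB p.1) p.2) v).
Proof.
exists (sim_coins Q), (@simA Q sigma), (@simB Q sigma) => x y H_inj.
split=> v; last exact: viewB_simulated.
have [<-|neq_xy] := eqVneq x y; first exact: viewA_simulated_eq.
by apply: viewA_simulated_neq; apply: contra_neq neq_xy.
Qed.
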